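(* Let $X$ and $Y$ be Hausdorff uniform spaces and $f\colon X\to Y$ a function generating the uniform structure of $Y$. (1) If $f$ satisfies conditions GP1 and GP2, then $\widetilde f\colon GP(X,x_0)\to GP(Y,f(x_0))$ is a uniform equivalence for each $x_0\in X$. (2) If $X$ is joinable and $\widetilde f\colon GP(X,x_1)\to GP(Y,f(x_1))$ is a uniform equivalence for some $x_1\in X$, then $f$ satisfies GP1 and GP2.
   Context: $f(E)=\{(f(x),f(y)):(x,y)\in E\}$; a surjection $f$ generates the uniform structure of its range if the sets $f(E)$ form a base of it. $R(X,E)$ is the Rips complex (vertex set $X$, simplices the finite $F$ with $F\times F\subset E$); $e(x,y)$ the edge-path; $f_E\colon R(X,E)\to R(Y,f(E))$ the induced simplicial map. Paths $c,d$ in $R(X,E)$ with end-points in $X$ are $E$-homotopic if their initial points $x_c,x_d$ and terminal points $y_c,y_d$ satisfy $(x_c,x_d),(y_c,y_d)\in E$ and $c\simeq e(x_c,x_d)\ast d\ast e(y_d,y_c)$ rel. end-points in $R(X,E)$. A generalized path from $x$ to $y$ is a family $\{[c_E]\}_E$ over all entourages of homotopy classes rel. end-points of paths from $x$ to $y$ in $R(X,E)$ with $c_F\simeq c_E$ in $R(X,E)$ for $F\subset E$. $GP(X,x_0)$ is the set of generalized paths starting at $x_0$ with the uniform structure with base $F^\ast=\{(c,d): c_F \text{ is } F\text{-homotopic to } d_F\}$; two generalized paths $c,d$ are called $F$-homotopic if $(c,d)\in F^\ast$. For uniformly continuous $f$, $\widetilde f\colon GP(X,x_0)\to GP(Y,f(x_0))$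 is defined by $\widetilde f(c)_F=[f_E(c_E)]$ with $E=f^{-1}(F)$. $X$ is joinable if any two points are joined by a generalized path. GP1: every generalized path in $Y$ starting at $f(x_0)$ equals $\widetilde f(d)$ for some generalized path $d$ in $X$ starting at $x_0$ (for every $x_0\in X$). GP2: for every entourage $E$ of $X$ there is an entourage $F$ of $X$ such that any two generalized paths $\alpha,\beta$ in $X$ with common origin are $E$-homotopic whenever $\widetilde f(\alpha)$ and $\widetilde f(\beta)$ are $f(F)$-homotopic. *)

From Stdlib Require Import List Relations.
Import ListNotations.

Definition ent (X : Type) := X -> X -> Prop.

Definition subrel {X : Type} (E F : ent X) : Prop := forall a b, E a b -> F a b.

Definition uniformity {X : Type} (U : ent X -> Prop) : Prop :=
  U (fun _ _ => True) /\
  (forall E, U E -> forall x, E x x) /\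
  (forall E F, U E -> subrel E F -> U F) /\
  (forall E F, U E -> U F -> U (fun a b => E a b /\ F a b)) /\
  (forall E, U E -> U (fun a b => E b a)) /\
  (forall E, U E -> exists F, U F /\ forall x y z, F x y -> F y z -> E x z).

Definition hausdorff {X : Type} (U : ent X -> Prop) : Prop :=
  forall x y, (forall E, U E -> E x y) -> x = y.

Definition img {X Y : Type} (f : X -> Y) (E : ent X) : ent Y :=
  fun u v => exists x y, E x y /\ f x = u /\ f y = v.

Definition preim {X Y : Type} (f : X -> Y) (F : ent Y) : ent X :=
  fun a b => F (f a) (f b).

Definition generates {X Y : Type} (UX : ent X -> Prop) (UY : ent Y -> Prop)
  (f : X -> Y) : Prop :=
  (forall y, exists x, f x = y) /\
  (forall E, UX E -> UY (img f E)) /\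
  (forall G, UY G -> exists E, UX E /\ subrel (img f E) G).

(** Rips complex R(X,E): a finite set (list) is a simplex iff F x F ⊆ E *)
Definition simplex {X : Type} (E : ent X) (s : list X) : Prop :=
  forall u v, In u s -> In v s -> E u v.

(** edge paths in R(X,E), given by their vertex sequences *)
Fixpoint chain {X : Type} (E : ent X) (p : list X) : Prop :=
  match p with
  | a :: ((b :: _) as t) => simplex E [a; b] /\ chain E t
  | _ => True
  end.

Definition is_path {X : Type} (E : ent X) (x y : X) (p : list X) : Prop :=
  (exists l, p = x :: l) /\ chain E p /\ last p x = y.

(** elementary edge-path moves (generating homotopy rel. end-points) *)
Definition step {X : Type} (E : ent X) (p q : list X) : Prop :=
  (exists l1 l2 a b c, simplex E [a; b; c] /\
      p = l1 ++ a :: b :: c :: l2 /\ q = l1 ++ a :: c :: l2) \/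
  (exists l1 l2 a, p = l1 ++ a :: a :: l2 /\ q = l1 ++ a :: l2).

Definition htpy {X : Type} (E : ent X) (p q : list X) : Prop :=
  chain E p /\ chain E q /\ clos_refl_sym_trans (list X) (step E) p q.

Definition pcat {X : Type} (c d : list X) : list X := c ++ tl d.
Definition epath {X : Type} (x y : X) : list X := [x; y].

Definition ehtpy {X : Type} (E : ent X) (c d : list X) : Prop :=
  exists xc yc xd yd,
    is_path E xc yc c /\ is_path E xd yd d /\ E xc xd /\ E yc yd /\
    htpy E c (pcat (pcat (epath xc xd) d) (epath yd yc)).

(** generalized paths from x to y: a representative c_E for each entourage E *)
Definition gpath {X : Type} (U : ent X -> Prop) (x y : X)
  (g : ent X -> list X) : Prop :=
  (forall E, U E -> is_path E x y (g E)) /\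
  (forall E F, U E -> U F -> subrel F E -> htpy E (g F) (g E)).

Definition inGP {X : Type} (U : ent X -> Prop) (x0 : X) (g : ent X -> list X)
  : Prop := exists y, gpath U x0 y g.

Definition gpeq {X : Type} (U : ent X -> Prop) (g h : ent X -> list X) : Prop :=
  forall E, U E -> htpy E (g E) (h E).

(** basic entourage F^* of GP(X,x0) *)
Definition gpent {X : Type} (F : ent X) (g h : ent X -> list X) : Prop :=
  ehtpy F (g F) (h F).

Definition ftilde {X Y : Type} (f : X -> Y) (g : ent X -> list X) :
  ent Y -> list Y := fun F => map f (g (preim f F)).

Definition joinable {X : Type} (U : ent X -> Prop) : Prop :=
  forall x y, exists g, gpath U x y g.

Definition GP1 {X Y : Type} (UX : ent X -> Prop) (UY : ent Y -> Prop)
  (f : X -> Y) : Prop :=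
  forall x0 b, inGP UY (f x0) b ->
    exists d, inGP UX x0 d /\ gpeq UY (ftilde f d) b.

Definition GP2 {X Y : Type} (UX : ent X -> Prop) (UY : ent Y -> Prop)
  (f : X -> Y) : Prop :=
  forall E, UX E -> exists F, UX F /\
    forall (x : X) a b, inGP UX x a -> inGP UX x b ->
      gpent (img f F) (ftilde f a) (ftilde f b) -> gpent E a b.

(** f~ : GP(X,x0) -> GP(Y,f x0) is a uniform equivalence
    (well-defined, bijective, uniformly continuous with uniformly
    continuous inverse; uniformities given by the bases F^* ) *)
Definition unif_equiv {X Y : Type} (UX : ent X -> Prop) (UY : ent Y -> Prop)
  (f : X -> Y) (x0 : X) : Prop :=
  (forall a b, inGP UX x0 a -> inGP UX x0 b -> gpeq UX a b ->
     gpeq UY (ftilde f a) (ftilde f b)) /\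
  (forall a b, inGP UX x0 a -> inGP UX x0 b ->
     gpeq UY (ftilde f a) (ftilde f b) -> gpeq UX a b) /\
  (forall b, inGP UY (f x0) b -> exists a, inGP UX x0 a /\ gpeq UY (ftilde f a) b) /\
  (forall G, UY G -> exists F, UX F /\ forall a b, inGP UX x0 a -> inGP UX x0 b ->
     gpent F a b -> gpent G (ftilde f a) (ftilde f b)) /\
  (forall F, UX F -> exists G, UY G /\ forall a b, inGP UX x0 a -> inGP UX x0 b ->
     gpent G (ftilde f a) (ftilde f b) -> gpent F a b).

(* For (1): [f~] is uniformly continuous since [f] maps [f^-1(G)]-homotopies to
   [G]-homotopies, GP1 is surjectivity and GP2 is uniform continuity of the inverse.
   Injectivity also comes from GP2: if [f~ a = f~ b] then [a] and [b] are [E]-homotopic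
   for every entourage [E], which in the Hausdorff space [X] forces a common end point
   and then a homotopy in every Rips complex.
   For (2): a generalized path [g] from [x1] to [x0] identifies [GP(X,x0)] with a part
   of [GP(X,x1)] through [c |-> g * c], and likewise on [Y] via [f~ g]; prefixing
   preserves and reflects [E]-homotopy and [g^-1 * g] is homotopic to the constant path,
   so surjectivity and the uniform continuity of the inverse at [x1] transfer to [x0]. *)

From Stdlib Require Import List Relations.
Import ListNotations.

Lemma last_cons {X} (a : X) l d : last (a :: l) d = last l a.
Proof.
  revert a d; induction l as [|b l IH]; intros a d; [reflexivity|].
  change (last (a :: b :: l) d) with (last (b :: l) d). now rewrite !IH.
Qed.

Lemma last_app {X} (l m : list X) d : last (l ++ m) d = last m (last l d).
Proof.
  revert d; induction l as [|a l IH]; intro d; [reflexivity|].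
  rewrite <- app_comm_cons, !last_cons. apply IH.
Qed.

Lemma clos_rst_map {A B} (R : relation A) (S : relation B) (h : A -> B) :
  (forall x y, R x y -> S (h x) (h y)) ->
  forall x y, clos_refl_sym_trans A R x y -> clos_refl_sym_trans B S (h x) (h y).
Proof.
  intros HRS x y C; induction C.
  - now apply rst_step, HRS.
  - apply rst_refl.
  - now apply rst_sym.
  - eapply rst_trans; eauto.
Qed.

Lemma clos_rst_invariant {A B} (R : relation A) (P : A -> B) :
  (forall x y, R x y -> P x = P y) ->
  forall x y, clos_refl_sym_trans A R x y -> P x = P y.
Proof. intros HP x y C; induction C; congruence || auto. Qed.

(** * Simplices and edge paths *)

Lemma simplex_incl {X} (E : ent X) s s' :
  incl s s' -> simplex E s' -> simplex E s.
Proof. intros Hs S u v Hu Hv. apply S; auto. Qed.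

Lemma simplex_mono {X} (E F : ent X) s : subrel E F -> simplex E s -> simplex F s.
Proof. intros EF S u v Hu Hv. apply EF, S; auto. Qed.

Lemma simplex_map {X Y} (f : X -> Y) G s :
  simplex (preim f G) s -> simplex G (map f s).
Proof.
  intros S u v Hu Hv.
  apply in_map_iff in Hu as [a [<- Ha]]; apply in_map_iff in Hv as [b [<- Hb]].
  exact (S a b Ha Hb).
Qed.

Lemma simplex_pair_refl {X} (E : ent X) x : E x x -> simplex E [x; x].
Proof. intros Ex u v [<-|[<-|[]]] [<-|[<-|[]]]; exact Ex. Qed.

Lemma chain_app {X} (E : ent X) l a m :
  chain E (l ++ [a]) -> chain E (a :: m) -> chain E (l ++ a :: m).
Proof.
  induction l as [|b [|c l] IH]; [easy| |]; intros H1 H2.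
  - split; [apply H1|exact H2].
  - destruct H1 as [S H1]. split; [exact S|exact (IH H1 H2)].
Qed.

Lemma chain_app_r {X} (E : ent X) l m : chain E (l ++ m) -> chain E m.
Proof.
  induction l as [|a [|b l] IH]; [easy| |]; intro H.
  - destruct m; [exact I|apply H].
  - apply IH, H.
Qed.

Lemma chain_mono {X} (E F : ent X) p : subrel E F -> chain E p -> chain F p.
Proof.
  intro EF; induction p as [|a [|b p] IH]; [easy|easy|].
  intros [S H]. split; [exact (simplex_mono E F _ EF S)|exact (IH H)].
Qed.

Lemma chain_map {X Y} (f : X -> Y) G p : chain (preim f G) p -> chain G (map f p).
Proof.
  induction p as [|a [|b p] IH]; [easy|easy|].
  intros [S H]. split; [exact (simplex_map f G [a; b] S)|exact (IH H)].
Qed.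

Lemma chain_rev {X} (E : ent X) p : chain E p -> chain E (rev p).
Proof.
  induction p as [|a [|b p] IH]; [easy|easy|].
  intros [S H]. change (rev (a :: b :: p)) with ((rev p ++ [b]) ++ [a]).
  rewrite <- app_assoc. apply chain_app; [exact (IH H)|].
  split; [|exact I]. revert S; apply simplex_incl; intros u; simpl; tauto.
Qed.

Lemma is_path_endpoints {X} (E E' : ent X) x y x' y' p :
  is_path E x y p -> is_path E' x' y' p -> x = x' /\ y = y'.
Proof. intros [[l ->] [_ H1]] [[l' H] [_ H2]]. injection H as <- <-. now subst. Qed.

Lemma is_path_mono {X} (E F : ent X) x y p :
  subrel E F -> is_path E x y p -> is_path F x y p.
Proof. intros EF [H1 [H2 H3]]. split; [|split]; eauto using chain_mono. Qed.

Lemma is_path_map {X Y} (f : X -> Y) G x y p :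
  is_path (preim f G) x y p -> is_path G (f x) (f y) (map f p).
Proof.
  intros [[l ->] [Hc Hl]]. split; [now exists (map f l)|split; [now apply chain_map|]].
  rewrite last_cons in Hl; subst y. simpl map; rewrite last_cons.
  clear; revert x; induction l as [|a l IH]; intro x; [reflexivity|].
  simpl map; rewrite !last_cons. apply IH.
Qed.

Lemma is_path_nil {X} (E : ent X) x y : ~ is_path E x y [].
Proof. intros [[l H] _]; discriminate. Qed.

Lemma is_path_split_last {X} (E : ent X) x y p :
  is_path E x y p -> p = removelast p ++ [y].
Proof. intros [[l ->] [_ <-]]. now apply app_removelast_last. Qed.

Lemma is_path_rev {X} (E : ent X) x y p : is_path E x y p -> is_path E y x (rev p).
Proof.
  intros Hp. pose proof (is_path_split_last _ _ _ _ Hp) as Hd.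
  destruct Hp as [[l ->] [Hc _]]. split; [|split].
  - rewrite Hd, rev_app_distr. now eexists.
  - now apply chain_rev.
  - simpl rev. now rewrite last_app.
Qed.

Lemma pcat_cons {X} (E : ent X) x y p t :
  is_path E x y p -> pcat p (y :: t) = removelast p ++ y :: t.
Proof.
  intro Hp. unfold pcat; simpl tl.
  rewrite (is_path_split_last _ _ _ _ Hp) at 1. now rewrite <- app_assoc.
Qed.

Lemma is_path_pcat {X} (E : ent X) x y z p q :
  is_path E x y p -> is_path E y z q -> is_path E x z (pcat p q).
Proof.
  intros Hp Hq. pose proof (is_path_split_last _ _ _ _ Hp) as Hd.
  destruct Hp as [[l ->] [Hcp Hlp]], Hq as [[m ->] [Hcq Hlq]].
  unfold pcat; simpl tl. split; [|split].
  - now eexists.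
  - rewrite Hd, <- app_assoc. apply chain_app; [rewrite <- Hd|]; assumption.
  - rewrite last_app, Hlp. now rewrite last_cons in Hlq.
Qed.

Lemma is_path_snoc {X} (E : ent X) x y z p :
  is_path E x y p -> simplex E [y; z] -> is_path E x z (p ++ [z]).
Proof.
  intros Hp S. change (p ++ [z]) with (pcat p [y; z]).
  apply (is_path_pcat E x y z); [exact Hp|].
  split; [now exists [z]|split; [split; [exact S|exact I]|reflexivity]].
Qed.

Lemma pcat_assoc {X} (p q r : list X) :
  q <> [] -> pcat (pcat p q) r = pcat p (pcat q r).
Proof.
  destruct q as [|a q]; [congruence|]. intros _. unfold pcat; simpl.
  now rewrite app_assoc.
Qed.

Lemma map_pcat {X Y} (f : X -> Y) p q : map f (pcat p q) = pcat (map f p) (map f q).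
Proof. unfold pcat. rewrite map_app. now destruct q. Qed.

(** * Homotopy of edge paths *)

Lemma step_app_l {X} (E : ent X) p q q' : step E q q' -> step E (p ++ q) (p ++ q').
Proof.
  intros [(l1 & l2 & a & b & c & S & -> & ->)|(l1 & l2 & a & -> & ->)].
  - left. exists (p ++ l1), l2, a, b, c. now rewrite !app_assoc.
  - right. exists (p ++ l1), l2, a. now rewrite !app_assoc.
Qed.

Lemma step_app_r {X} (E : ent X) p p' s : step E p p' -> step E (p ++ s) (p' ++ s).
Proof.
  intros [(l1 & l2 & a & b & c & S & -> & ->)|(l1 & l2 & a & -> & ->)].
  - left. exists l1, (l2 ++ s), a, b, c. now rewrite <- !app_assoc.
  - right. exists l1, (l2 ++ s), a. now rewrite <- !app_assoc.
Qed.

Lemma step_mono {X} (E F : ent X) p q : subrel E F -> step E p q -> step F p q.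
Proof.
  intros EF [(l1 & l2 & a & b & c & S & -> & ->)|H]; [|now right].
  left. exists l1, l2, a, b, c. split; [exact (simplex_mono E F _ EF S)|easy].
Qed.

Lemma step_map {X Y} (f : X -> Y) G p q :
  step (preim f G) p q -> step G (map f p) (map f q).
Proof.
  intros [(l1 & l2 & a & b & c & S & -> & ->)|(l1 & l2 & a & -> & ->)].
  - left. exists (map f l1), (map f l2), (f a), (f b), (f c). rewrite !map_app.
    split; [exact (simplex_map f G [a; b; c] S)|easy].
  - right. exists (map f l1), (map f l2), (f a). now rewrite !map_app.
Qed.

Lemma step_rev {X} (E : ent X) p q : step E p q -> step E (rev p) (rev q).
Proof.
  intros [(l1 & l2 & a & b & c & S & -> & ->)|(l1 & l2 & a & -> & ->)].
  - left. exists (rev l2), (rev l1), c, b, a. rewrite !rev_app_distr; simpl.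
    rewrite <- !app_assoc. split; [|easy].
    revert S; apply simplex_incl; intro u; simpl; tauto.
  - right. exists (rev l2), (rev l1), a. rewrite !rev_app_distr; simpl.
    now rewrite <- !app_assoc.
Qed.

Lemma step_hd {X} (E : ent X) p q : step E p q -> hd_error p = hd_error q.
Proof.
  now intros [(l1 & l2 & a & b & c & S & -> & ->)|(l1 & l2 & a & -> & ->)]; destruct l1.
Qed.

Lemma step_last {X} (E : ent X) d p q : step E p q -> last p d = last q d.
Proof.
  intros [(l1 & l2 & a & b & c & S & -> & ->)|(l1 & l2 & a & -> & ->)];
    now rewrite !last_app, !last_cons.
Qed.

Lemma htpy_sym {X} (E : ent X) p q : htpy E p q -> htpy E q p.
Proof. intros (Hp & Hq & C). split; [|split]; auto using rst_sym. Qed.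

Lemma htpy_trans {X} (E : ent X) p q r : htpy E p q -> htpy E q r -> htpy E p r.
Proof. intros (Hp & _ & C) (_ & Hr & C'). split; [|split]; eauto using rst_trans. Qed.

Lemma htpy_congr {X Y} (E : ent X) (F : ent Y) (h : list X -> list Y) p q :
  (forall p' q', step E p' q' -> step F (h p') (h q')) ->
  chain F (h p) -> chain F (h q) -> htpy E p q -> htpy F (h p) (h q).
Proof.
  intros Hh Hp Hq (_ & _ & C). split; [|split]; auto.
  exact (clos_rst_map _ _ h Hh _ _ C).
Qed.

Lemma htpy_mono {X} (E F : ent X) p q : subrel E F -> htpy E p q -> htpy F p q.
Proof.
  intros EF H. apply (htpy_congr E F id); [intros; now apply (step_mono E)| | |exact H];
    apply (chain_mono E F _ EF), H.
Qed.

Lemma htpy_map {X Y} (f : X -> Y) G p q :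
  htpy (preim f G) p q -> htpy G (map f p) (map f q).
Proof.
  intros H. apply (htpy_congr (preim f G) G (map f)); [apply step_map| | |exact H];
    apply chain_map, H.
Qed.

Lemma htpy_rev {X} (E : ent X) p q : htpy E p q -> htpy E (rev p) (rev q).
Proof.
  intros H. apply (htpy_congr E E (@rev X)); [apply step_rev| | |exact H]; apply chain_rev, H.
Qed.

Lemma htpy_is_path {X} (E : ent X) x y p q :
  htpy E p q -> is_path E x y p -> is_path E x y q.
Proof.
  intros (_ & Hq & C) [[l ->] [_ Hl]].
  pose proof (clos_rst_invariant _ _ (step_hd E) _ _ C) as Hhd.
  pose proof (clos_rst_invariant _ _ (step_last E x) _ _ C) as Hlast.
  split; [|split; [exact Hq|congruence]].
  destruct q as [|a q]; [discriminate|]. injection Hhd as ->. now exists q.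
Qed.

Lemma htpy_app_r {X} (E : ent X) p q s :
  chain E (p ++ s) -> chain E (q ++ s) -> htpy E p q -> htpy E (p ++ s) (q ++ s).
Proof. apply (htpy_congr E E (fun p => p ++ s)); intros; now apply step_app_r. Qed.

Lemma htpy_pcat_l {X} (E : ent X) x y z p p' q :
  is_path E x y p -> is_path E x y p' -> is_path E y z q -> htpy E p p' ->
  htpy E (pcat p q) (pcat p' q).
Proof.
  intros Hp Hp' Hq. apply (htpy_congr E E (fun p => p ++ tl q));
    [intros; now apply step_app_r| |]; eapply is_path_pcat; eauto.
Qed.

Lemma htpy_pcat_r {X} (E : ent X) x y z z' p q q' :
  is_path E x y p -> is_path E y z q -> is_path E y z' q' -> htpy E q q' ->
  htpy E (pcat p q) (pcat p q').
Proof.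
  intros Hp Hq Hq' H.
  pose proof (is_path_pcat E x y z p q Hp Hq) as Hpq.
  pose proof (is_path_pcat E x y z' p q' Hp Hq') as Hpq'.
  destruct Hq as [[t ->] _], Hq' as [[t' ->] _].
  rewrite !(pcat_cons E x y p) in * by exact Hp.
  apply (htpy_congr E E (app (removelast p)));
    [intros; now apply step_app_l|apply Hpq|apply Hpq'|exact H].
Qed.

Lemma htpy_pcat {X} (E : ent X) x y z z' p p' q q' :
  is_path E x y p -> is_path E x y p' -> is_path E y z q -> is_path E y z' q' ->
  htpy E p p' -> htpy E q q' -> htpy E (pcat p q) (pcat p' q').
Proof. intros. eapply htpy_trans; [eapply htpy_pcat_l|eapply htpy_pcat_r]; eauto. Qed.

(* Each backtracking edge [b; x; b] is removed by one triangle move [b; x; b] ~> [b; b]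
   followed by one degeneracy move. *)
Lemma rev_app_rst_last {X} (E : ent X) x t :
  chain E (x :: t) -> clos_refl_sym_trans _ (step E) (rev (x :: t) ++ t) [last t x].
Proof.
  revert x; induction t as [|b t IH]; intros x H; [apply rst_refl|destruct H as [S H]].
  eapply rst_trans; [|rewrite last_cons; exact (IH b H)].
  change (rev (x :: b :: t)) with ((rev t ++ [b]) ++ [x]).
  change (rev (b :: t)) with (rev t ++ [b]). rewrite <- !app_assoc; simpl.
  eapply rst_trans; apply rst_step.
  - left. exists (rev t), t, b, x, b. split; [|easy].
    revert S; apply simplex_incl; intro u; simpl; tauto.
  - right. now exists (rev t), t, b.
Qed.

Lemma htpy_rev_pcat_cancel {X} (E : ent X) x y z p q :
  is_path E x y p -> is_path E y z q -> htpy E (pcat (pcat (rev p) p) q) q.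
Proof.
  intros Hp Hq. split; [|split; [apply Hq|]].
  - eapply is_path_pcat; [eapply is_path_pcat; [eapply is_path_rev|]|]; eauto.
  - destruct Hp as [[t ->] [Hc Hl]], Hq as [[m ->] _].
    rewrite last_cons in Hl; subst y. unfold pcat; simpl tl.
    exact (clos_rst_map _ _ (fun p => p ++ m) (fun p q => step_app_r E p q m) _ _
             (rev_app_rst_last E x t Hc)).
Qed.

(** * E-homotopy of paths with a common origin *)

Lemma htpy_dup_head {X} (E : ent X) x c w :
  E x x -> htpy E c (x :: x :: w) <-> htpy E c (x :: w).
Proof.
  intro Ex.
  assert (St : step E (x :: x :: w) (x :: w)) by (right; now exists [], w, x).
  split; intros (Hc & Hw & C); split; auto; split.
  - exact (chain_app_r E [x] _ Hw).
  - exact (rst_trans _ _ _ _ _ C (rst_step _ _ _ _ St)).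
  - destruct w; [|split]; [split|..]; auto using simplex_pair_refl; exact I.
  - exact (rst_trans _ _ _ _ _ C (rst_sym _ _ _ _ (rst_step _ _ _ _ St))).
Qed.

(* With a common origin x the edge e(x,x) is degenerate, so E-homotopy only asks for a
   homotopy between c and d followed by the edge e(y2,y1). *)
Lemma ehtpy_common_origin {X} (E : ent X) x y1 y2 c d :
  is_path E x y1 c -> is_path E x y2 d -> E x x ->
  ehtpy E c d <-> E y1 y2 /\ htpy E c (d ++ [y1]).
Proof.
  intros Hc Hd Ex. pose proof Hd as [[t ->] _].
  change (pcat (pcat (epath x x) (x :: t)) (epath y2 y1)) with (x :: x :: (t ++ [y1])).
  change ((x :: t) ++ [y1]) with (x :: t ++ [y1]). split.
  - intros (xc & yc & xd & yd & Pc & Pd & H1 & H2 & H3).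
    destruct (is_path_endpoints _ _ _ _ _ _ _ Hc Pc) as [<- <-].
    destruct (is_path_endpoints _ _ _ _ _ _ _ Hd Pd) as [<- <-].
    split; [exact H2|]. now apply htpy_dup_head.
  - intros [H1 H2]. exists x, y1, x, y2. do 4 (split; [assumption|]). now apply htpy_dup_head.
Qed.

Lemma htpy_snoc_last {X} (E : ent X) x y d :
  is_path E x y d -> E y y -> htpy E (d ++ [y]) d.
Proof.
  intros Hd Ey. split; [|split; [apply Hd|]].
  - apply (is_path_snoc E x y y); [exact Hd|]. now apply simplex_pair_refl.
  - rewrite (is_path_split_last _ _ _ _ Hd) at 1 2. rewrite <- app_assoc.
    apply rst_step. right. now exists (removelast d), [], y.
Qed.

Lemma ehtpy_same_ends {X} (E : ent X) x y c d :
  is_path E x y c -> is_path E x y d -> E x x -> E y y -> ehtpy E c d <-> htpy E c d.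
Proof.
  intros Hc Hd Ex Ey. rewrite (ehtpy_common_origin E x y y c d Hc Hd Ex).
  pose proof (htpy_snoc_last E x y d Hd Ey) as Hsnoc. split.
  - intros [_ H]. exact (htpy_trans _ _ _ _ H Hsnoc).
  - intro H. split; [exact Ey|]. exact (htpy_trans _ _ _ _ H (htpy_sym _ _ _ Hsnoc)).
Qed.

Lemma ehtpy_map {X Y} (f : X -> Y) G c d :
  ehtpy (preim f G) c d -> ehtpy G (map f c) (map f d).
Proof.
  intros (xc & yc & xd & yd & Pc & Pd & H1 & H2 & H3).
  exists (f xc), (f yc), (f xd), (f yd).
  do 4 (split; [now apply is_path_map || assumption|]).
  apply htpy_map in H3. now rewrite !map_pcat in H3.
Qed.

Lemma ehtpy_pcat_l {X} (E : ent X) z x y1 y2 p c d :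
  is_path E z x p -> is_path E x y1 c -> is_path E x y2 d -> E x x -> E z z ->
  ehtpy E (pcat p c) (pcat p d) <-> ehtpy E c d.
Proof.
  intros Hp Hc Hd Ex Ez.
  rewrite (ehtpy_common_origin E x y1 y2 c d Hc Hd Ex).
  rewrite (ehtpy_common_origin E z y1 y2); [|eapply is_path_pcat; eauto..|exact Ez].
  assert (Happ : pcat p d ++ [y1] = pcat p (d ++ [y1])).
  { destruct Hd as [[t ->] _]. unfold pcat; simpl. now rewrite app_assoc. }
  rewrite Happ. apply and_iff_compat_l. split; intro H.
  - assert (Hd' : is_path E x y1 (d ++ [y1])).
    { destruct H as (_ & Ch & _). destruct Hd as [[t ->] _].
      change ((x :: t) ++ [y1]) with (x :: t ++ [y1]) in Ch |- *.
      rewrite (pcat_cons E z x p) in Ch by exact Hp.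
      split; [now eexists|split; [exact (chain_app_r E _ _ Ch)|]].
      change (x :: t ++ [y1]) with ((x :: t) ++ [y1]). apply last_last. }
    pose proof (htpy_pcat_r E x z y1 y1 (rev p) _ _ (is_path_rev _ _ _ _ Hp)
                  (is_path_pcat E z x y1 p c Hp Hc) (is_path_pcat E z x y1 p _ Hp Hd') H) as K.
    assert (Hne : p <> []) by (intros ->; exact (is_path_nil _ _ _ Hp)).
    rewrite <- !pcat_assoc in K by exact Hne.
    eapply htpy_trans; [apply htpy_sym, (htpy_rev_pcat_cancel E z x y1 p c Hp Hc)|].
    eapply htpy_trans; [exact K|exact (htpy_rev_pcat_cancel E z x y1 p _ Hp Hd')].
  - eapply htpy_pcat_r; [exact Hp|exact Hc| |exact H]. eapply htpy_is_path; eauto.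
Qed.

Lemma simplex_last_edge {X} (E : ent X) x y1 y2 d :
  is_path E x y2 d -> chain E (d ++ [y1]) -> simplex E [y2; y1].
Proof.
  intros Hd H. rewrite (is_path_split_last _ _ _ _ Hd), <- app_assoc in H.
  apply (chain_app_r E _ _ H).
Qed.

(** * Generalized paths *)

Definition gpcat {X} (g h : ent X -> list X) : ent X -> list X :=
  fun E => pcat (g E) (h E).

Definition gprev {X} (g : ent X -> list X) : ent X -> list X := fun E => rev (g E).

Section GeneralizedPaths.
Context {X : Type} {U : ent X -> Prop} (hU : uniformity U).

Lemma entourage_refl E x : U E -> E x x.
Proof. intro HE. now apply hU. Qed.

Lemma gpath_gpcat x y z g h :
  gpath U x y g -> gpath U y z h -> gpath U x z (gpcat g h).
Proof.
  intros [G1 G2] [H1 H2]. split; intros E; [intros HE|intros F HE HF EF].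
  - eapply is_path_pcat; eauto.
  - eapply htpy_pcat; eauto using is_path_mono.
Qed.

Lemma gpath_gprev x y g : gpath U x y g -> gpath U y x (gprev g).
Proof.
  intros [G1 G2]. split; intros E; [intros HE|intros F HE HF EF].
  - eapply is_path_rev; eauto.
  - now apply htpy_rev, G2.
Qed.

Lemma gpent_mono x ya yb a b E1 E2 :
  gpath U x ya a -> gpath U x yb b -> U E1 -> U E2 -> subrel E1 E2 ->
  gpent E1 a b -> gpent E2 a b.
Proof.
  intros [A1 A2] [B1 B2] HE1 HE2 E12. unfold gpent.
  rewrite (ehtpy_common_origin E1 x ya yb), (ehtpy_common_origin E2 x ya yb)
    by (apply A1 || apply B1 || apply entourage_refl; assumption).
  intros [Hy H]. split; [now apply E12|].
  assert (Hlast : simplex E2 [yb; ya]).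
  { apply (simplex_mono E1 E2 _ E12), (simplex_last_edge E1 x ya yb (b E1)); auto.
    apply H. }
  eapply htpy_trans; [apply htpy_sym, (A2 E2 E1); auto|].
  eapply htpy_trans; [exact (htpy_mono _ _ _ _ E12 H)|].
  apply htpy_app_r; [eapply chain_mono, H; exact E12| |now apply B2].
  eapply is_path_snoc; [apply B1|]; auto.
Qed.

Lemma gpent_gpcat_l z x ya yb g a b E :
  gpath U z x g -> gpath U x ya a -> gpath U x yb b -> U E ->
  gpent E (gpcat g a) (gpcat g b) <-> gpent E a b.
Proof.
  intros Hg Ha Hb HE. apply (ehtpy_pcat_l E z x ya yb);
    [apply Hg|apply Ha|apply Hb|apply entourage_refl..]; exact HE.
Qed.

Lemma gpent_of_gpeq x y a b E :
  gpath U x y a -> gpeq U a b -> U E -> gpent E a b.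
Proof.
  intros Ha Hab HE. pose proof (proj1 Ha E HE) as PaE.
  pose proof (htpy_is_path E x y _ _ (Hab E HE) PaE) as PbE.
  apply (ehtpy_same_ends E x y); [exact PaE|exact PbE|apply entourage_refl..|apply Hab];
    exact HE.
Qed.

Hypothesis hH : hausdorff U.

(* Being [E]-homotopic for every [E] forces a common end point, by separation. *)
Lemma gpeq_of_gpent x ya yb a b :
  gpath U x ya a -> gpath U x yb b -> (forall E, U E -> gpent E a b) -> gpeq U a b.
Proof.
  intros Ha Hb Hab.
  assert (Hend : forall E, U E -> E ya yb).
  { intros E HE. apply (ehtpy_common_origin E x ya yb (a E) (b E));
      [apply Ha|apply Hb|apply entourage_refl|apply Hab]; exact HE. }
  apply hH in Hend; subst yb.
  intros E HE. apply (ehtpy_same_ends E x ya);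
    [apply Ha|apply Hb|apply entourage_refl..|apply Hab]; exact HE.
Qed.

End GeneralizedPaths.

(** * The induced map on generalized paths *)

Section InducedMap.
Variables (X Y : Type) (UX : ent X -> Prop) (UY : ent Y -> Prop) (f : X -> Y).
Hypotheses (hUX : uniformity UX) (hUY : uniformity UY) (hf : generates UX UY f).

Lemma preim_entourage G : UY G -> UX (preim f G).
Proof.
  intro HG. destruct (proj2 (proj2 hf) G HG) as [E [HE EG]].
  apply hUX with E; [exact HE|]. intros a b Hab. apply EG. now exists a, b.
Qed.

Lemma ftilde_gpath x y a : gpath UX x y a -> gpath UY (f x) (f y) (ftilde f a).
Proof.
  intros [A1 A2]. split.
  - intros G HG. apply is_path_map, A1, preim_entourage, HG.
  - intros G G' HG HG' GG'. apply htpy_map, A2; auto using preim_entourage.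
    intros u v H. apply GG', H.
Qed.

Lemma ftilde_gpeq a b : gpeq UX a b -> gpeq UY (ftilde f a) (ftilde f b).
Proof. intros Hab G HG. apply htpy_map, Hab, preim_entourage, HG. Qed.

Lemma gpent_ftilde G a b : gpent (preim f G) a b -> gpent G (ftilde f a) (ftilde f b).
Proof. apply ehtpy_map. Qed.

Lemma ftilde_gpcat g a G : ftilde f (gpcat g a) G = gpcat (ftilde f g) (ftilde f a) G.
Proof. apply map_pcat. Qed.

Lemma ftilde_gprev g G : ftilde f (gprev g) G = gprev (ftilde f g) G.
Proof. apply map_rev. Qed.

Lemma ftilde_injective_of_GP2 (hHX : hausdorff UX) :
  GP2 UX UY f -> forall x0 a b, inGP UX x0 a -> inGP UX x0 b ->
  gpeq UY (ftilde f a) (ftilde f b) -> gpeq UX a b.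
Proof.
  intros g2 x0 a b [ya Ha] [yb Hb] Hfab.
  apply (gpeq_of_gpent hUX hHX x0 ya yb); [exact Ha|exact Hb|].
  intros E HE. destruct (g2 E HE) as [F [HF HFE]].
  apply (HFE x0); [now exists ya|now exists yb|].
  apply (gpent_of_gpeq hUY (f x0) (f ya)); [now apply ftilde_gpath|exact Hfab|].
  apply hf, HF.
Qed.

Lemma unif_equiv_of_GP1_GP2 (hHX : hausdorff UX) x0 :
  GP1 UX UY f -> GP2 UX UY f -> unif_equiv UX UY f x0.
Proof.
  intros g1 g2. split; [|split; [|split; [|split]]].
  - intros a b _ _. apply ftilde_gpeq; assumption.
  - exact (ftilde_injective_of_GP2 hHX g2 x0).
  - apply g1.
  - intros G HG. exists (preim f G). split; [now apply preim_entourage|].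
    intros a b _ _. apply gpent_ftilde.
  - intros F HF. destruct (g2 F HF) as [F' [HF' HF'F]]. exists (img f F').
    split; [apply hf, HF'|]. intros a b. apply HF'F.
Qed.

(* Transport along a generalized path [g] from [x1] to [x0] in the joinable space [X]:
   [b] in [GP(Y, f x0)] becomes [f~ g * b] in [GP(Y, f x1)], which has a preimage [a],
   and then [g^-1 * a] is a preimage of [b]. *)
Lemma GP1_of_unif_equiv x1 :
  joinable UX -> unif_equiv UX UY f x1 -> GP1 UX UY f.
Proof.
  intros J [_ [_ [onto _]]] x0 b [yb Hb]. destruct (J x1 x0) as [g Hg].
  pose proof (ftilde_gpath _ _ _ Hg) as Hfg.
  pose proof (gpath_gpcat _ _ _ _ _ Hfg Hb) as Hfgb.
  destruct (onto _ (ex_intro _ yb Hfgb)) as [a [[ya Ha] Hfa]].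
  exists (gpcat (gprev g) a). split.
  { exists ya. exact (gpath_gpcat _ _ _ _ _ (gpath_gprev _ _ _ Hg) Ha). }
  intros G HG. rewrite ftilde_gpcat. unfold gpcat. rewrite ftilde_gprev. unfold gprev.
  pose proof (proj1 Hfg G HG) as Pg.
  assert (Hne : ftilde f g G <> []).
  { intros Hn; rewrite Hn in Pg. exact (is_path_nil _ _ _ Pg). }
  eapply htpy_trans.
  - eapply htpy_pcat_r;
      [eapply is_path_rev, Pg|apply (ftilde_gpath _ _ _ Ha)|apply Hfgb|apply Hfa]; exact HG.
  - unfold gpcat. rewrite <- pcat_assoc by exact Hne.
    exact (htpy_rev_pcat_cancel G _ _ _ _ _ Pg (proj1 Hb _ HG)).
Qed.

(* Prefixing a generalized path from [x1] to [x] moves the base point to [x1] and both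
   preserves and reflects [E]-homotopy, on either side of [f~]. *)
Lemma GP2_of_unif_equiv x1 :
  joinable UX -> unif_equiv UX UY f x1 -> GP2 UX UY f.
Proof.
  intros J [_ [_ [_ [_ inv_cont]]]] E HE. destruct (inv_cont E HE) as [G [HG HGE]].
  destruct (proj2 (proj2 hf) G HG) as [F [HF HFG]].
  exists F. split; [exact HF|]. intros x a b [ya Ha] [yb Hb] Hfab.
  destruct (J x1 x) as [g Hg].
  pose proof (ftilde_gpath _ _ _ Hg) as Hfg.
  pose proof (ftilde_gpath _ _ _ Ha) as Hfa.
  pose proof (ftilde_gpath _ _ _ Hb) as Hfb.
  assert (HfabG : gpent G (ftilde f a) (ftilde f b)).
  { apply (gpent_mono hUY _ _ _ _ _ (img f F) G Hfa Hfb); auto. apply hf, HF. }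
  apply (gpent_gpcat_l hUX x1 x ya yb g); auto.
  apply HGE; [exists ya; eapply gpath_gpcat; eauto|exists yb; eapply gpath_gpcat; eauto|].
  unfold gpent. rewrite !ftilde_gpcat.
  apply (gpent_gpcat_l hUY (f x1) (f x) (f ya) (f yb)); auto.
Qed.

End InducedMap.

Theorem mainTheorem12 (X Y : Type) (UX : ent X -> Prop) (UY : ent Y -> Prop)
  (f : X -> Y)
  (hUX : uniformity UX) (hUY : uniformity UY)
  (hHX : hausdorff UX) (hHY : hausdorff UY)
  (hf : generates UX UY f) :
  ((GP1 UX UY f /\ GP2 UX UY f) -> forall x0 : X, unif_equiv UX UY f x0) /\
  ((joinable UX /\ exists x1 : X, unif_equiv UX UY f x1) ->
     GP1 UX UY f /\ GP2 UX UY f).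
Proof.
  split.
  - intros [g1 g2] x0. exact (unif_equiv_of_GP1_GP2 _ _ _ _ _ hUX hUY hf hHX x0 g1 g2).
  - intros [J [x1 Hx1]]. split.
    + exact (GP1_of_unif_equiv _ _ _ _ _ hUX hf x1 J Hx1).
    + exact (GP2_of_unif_equiv _ _ _ _ _ hUX hUY hf x1 J Hx1).
Qed.
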